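(* Let $\Phi$ be a satisfiable 2-CNF and $\mathcal L_0$ any set of literals. Let $\Phi-\mathcal C(\Phi,\mathcal L_0)$ denote the formula obtained from $\Phi$ by deleting the clauses in $\mathcal C(\Phi,\mathcal L_0)$. Then $$Z\big(\Phi-\mathcal C(\Phi,\mathcal L_0)\big)\le 2^{|\mathcal V(\Phi,\mathcal L_0)|\cdot\mathbb 1\{\mathcal C(\Phi,\mathcal L_0)\ne\emptyset\}}\,Z(\Phi).$$
   Context: A 2-CNF is a conjunction of clauses, each the disjunction of two literals on two distinct variables. $Z(\cdot)$ is the number of satisfying assignments. For a literal $l$, $|l|$ denotes its underlying variable. $\mathcal L(\Phi,\mathcal L_0)$ is the output of Unit Clause Propagation: start from $\mathcal L=\mathcal L_0$ and, while $\Phi$ has a clause $l\vee\neg l'$ with $l'\in\mathcal L$ and $l\notin\mathcal L$, add $l$. Then: - $\mathcal V(\Phi,\mathcal L_0)=\{|l|:l\in\mathcal L(\Phi,\mathcal L_0)\}$; - $\mathcal V_0(\Phi,\mathcal L_0)$ is the set of $x$ with both $x,\neg x\in\mathcal L(\Phi,\mathcal L_0)$; - $\mathcal C(\Phi,\mathcal L_0)$ is the set of clauses of $\Phi$ all of whose variables lie in $\mathcal V_0(\Phi,\mathcal L_0)$. *)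

From mathcomp Require Import all_boot.
Set Implicit Arguments. Unset Strict Implicit. Unset Printing Implicit Defensive.

(* A literal is a pair (x, b): b = true means the positive literal x,
   b = false means the negative literal ~x. *)
Definition lit (n : nat) := ('I_n * bool)%type.
Definition var_of {n} (l : lit n) : 'I_n := l.1.
Definition neg {n} (l : lit n) : lit n := (l.1, ~~ l.2).

Definition clause (n : nat) := (lit n * lit n)%type.
Definition cnf (n : nat) := seq (clause n).

Definition wf_clause {n} (c : clause n) : bool := var_of c.1 != var_of c.2.
Definition is_2cnf {n} (Phi : cnf n) : bool := all wf_clause Phi.

Definition assignment (n : nat) := {ffun 'I_n -> bool}.
Definition lit_sat {n} (s : assignment n) (l : lit n) : bool := s l.1 == l.2.
Definition clause_sat {n} (s : assignment n) (c : clause n) : bool :=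
  lit_sat s c.1 || lit_sat s c.2.
Definition cnf_sat {n} (s : assignment n) (Phi : cnf n) : bool :=
  all (clause_sat s) Phi.

Definition Z {n} (Phi : cnf n) : nat := #|[set s : assignment n | cnf_sat s Phi]|.
Definition satisfiable {n} (Phi : cnf n) : Prop := exists s : assignment n, cnf_sat s Phi.

Definition ucp_step {n} (Phi : cnf n) (L0 : {set lit n}) (X : {set lit n})
  : {set lit n} :=
  L0 :|: X :|: [set l : lit n | has (fun c : clause n =>
        ((c.1 == l) && (neg c.2 \in X)) || ((c.2 == l) && (neg c.1 \in X))) Phi].

(* L(Phi, L0): the result of UCP = least fixpoint (closure of L0 under the rule). *)
Definition ucpL {n} (Phi : cnf n) (L0 : {set lit n}) : {set lit n} :=
  fixset (ucp_step Phi L0).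

Definition ucpV {n} (Phi : cnf n) (L0 : {set lit n}) : {set 'I_n} :=
  [set var_of l | l in ucpL Phi L0].

Definition ucpV0 {n} (Phi : cnf n) (L0 : {set lit n}) : {set 'I_n} :=
  [set x : 'I_n | ((x, true) \in ucpL Phi L0) && ((x, false) \in ucpL Phi L0)].

Definition inC {n} (Phi : cnf n) (L0 : {set lit n}) (c : clause n) : bool :=
  (var_of c.1 \in ucpV0 Phi L0) && (var_of c.2 \in ucpV0 Phi L0).

Definition delC {n} (Phi : cnf n) (L0 : {set lit n}) : cnf n :=
  filter (fun c => ~~ inC Phi L0 c) Phi.

Definition C_nonempty {n} (Phi : cnf n) (L0 : {set lit n}) : bool :=
  has (inC Phi L0) Phi.

(* Fix a satisfying assignment [sg] of [Phi].  Repair an assignment [s] of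
   [Phi - C] by copying [sg] on [V0], making every literal of [L] true on
   [V \ V0] (consistent, as no variable there has both signs in [L]), and
   keeping [s] elsewhere.  Closure of [L] under propagation shows that the
   repaired assignment satisfies [Phi]: a clause touching [V0] has its other
   literal in [L], and a clause avoiding [V0] is either satisfied by the forced
   values or untouched by propagation, where [s] satisfies it.  Since [s] can
   be recovered from its repair and its restriction to [V], this gives
   [Z (Phi - C) <= 2 ^ #|V| * Z Phi].  When [C] is empty, [Phi - C = Phi].
   The argument never uses that clauses are on two distinct variables. *)
From mathcomp Require Import all_boot.
Set Implicit Arguments. Unset Strict Implicit. Unset Printing Implicit Defensive.

Lemma leq_card_pair_inj (T U W : finType) (A : {set T}) (B : {set U})
    (f : T -> U) (g : T -> W) :
  {in A, forall x, f x \in B} -> {in A &, injective (fun x => (f x, g x))} ->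
  #|A| <= #|W| * #|B|.
Proof.
move=> fAB fg_inj; rewrite -(card_in_imset fg_inj) mulnC -cardsT -cardsX.
apply: subset_leq_card; apply/subsetP => _ /imsetP[x Ax ->].
by rewrite !inE /= fAB.
Qed.

Lemma card_ffun_sig_bool (n : nat) (V : {set 'I_n}) :
  #|{ffun {x : 'I_n | x \in V} -> bool}| = 2 ^ #|V|.
Proof. by rewrite card_ffun card_bool card_sig. Qed.

Section UnitPropagation.

Variables (n : nat) (Phi : cnf n) (L0 : {set lit n}).

Local Notation L := (ucpL Phi L0).
Local Notation V := (ucpV Phi L0).
Local Notation V0 := (ucpV0 Phi L0).

Lemma ucp_step_homo : {homo ucp_step Phi L0 : X Y / X \subset Y}.
Proof.
move=> X Y sXY; apply/subsetP => l; rewrite /ucp_step !inE.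
case/orP => [/orP[->//|/(subsetP sXY) ->]|]; first by rewrite orbT.
move=> hasX; apply/orP; right; apply: sub_has hasX => c /=.
by case/orP=> /andP[-> /(subsetP sXY) ->]; rewrite ?orbT.
Qed.

Lemma ucpL_closed (c : clause n) : c \in Phi ->
  (neg c.2 \in L -> c.1 \in L) /\ (neg c.1 \in L -> c.2 \in L).
Proof.
move=> cPhi; have unfoldL := fixsetK ucp_step_homo.
split=> negL; rewrite /ucpL -unfoldL; apply/setUP; right; rewrite inE;
  by apply/hasP; exists c; rewrite // eqxx negL ?orbT.
Qed.

Lemma mem_ucpV (l : lit n) : (var_of l \in V) = (l \in L) || (neg l \in L).
Proof.
case: l => x b; rewrite /neg /var_of /=; apply/imsetP/idP => [[[y c] yL ->]|].
  by case: b c yL => -[] /= ->; rewrite ?orbT.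
by case/orP=> ?; eexists; eauto.
Qed.

Lemma mem_ucpV0 (l : lit n) : (var_of l \in V0) = (l \in L) && (neg l \in L).
Proof. by case: l => x [] /=; rewrite inE // andbC. Qed.

Lemma ucpV0_sub_ucpV : V0 \subset V.
Proof.
apply/subsetP => x; rewrite -[x]/(var_of (x, true)) mem_ucpV mem_ucpV0.
by case/andP => ->.
Qed.

Lemma delC_id : ~~ C_nonempty Phi L0 -> delC Phi L0 = Phi.
Proof. by rewrite -all_predC => /all_filterP. Qed.

Variable sg : assignment n.

Definition ucp_repair (s : assignment n) : assignment n :=
  [ffun x => if x \in V0 then sg x else if x \in V then (x, true) \in L else s x].

Variable s : assignment n.

Lemma ucp_repair_out x : x \notin V -> ucp_repair s x = s x.
Proof.
move=> xV; have xV0 : x \notin V0 by apply: contra xV; apply/subsetP/ucpV0_sub_ucpV.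
by rewrite ffunE (negbTE xV) (negbTE xV0).
Qed.

Lemma lit_sat_repair_V0 (l : lit n) :
  var_of l \in V0 -> lit_sat (ucp_repair s) l = lit_sat sg l.
Proof. by move=> lV0; rewrite /lit_sat ffunE lV0. Qed.

Lemma lit_sat_repair_L (l : lit n) :
  l \in L -> var_of l \notin V0 -> lit_sat (ucp_repair s) l.
Proof.
move=> lL lV0; have lV : var_of l \in V by rewrite mem_ucpV lL.
have nlL : neg l \notin L by move: lV0; rewrite mem_ucpV0 lL.
rewrite /lit_sat ffunE (negbTE lV0) lV.
by case: l lL nlL {lV lV0} => x [] lL; rewrite /neg /= ?lL // => /negbTE ->.
Qed.

Lemma lit_sat_repair_out (l : lit n) :
  l \notin L -> neg l \notin L -> lit_sat (ucp_repair s) l = lit_sat s l.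
Proof.
by move=> lL nlL; rewrite /lit_sat ucp_repair_out // mem_ucpV negb_or lL.
Qed.

Lemma ucp_repair_sat :
  cnf_sat sg Phi -> cnf_sat s (delC Phi L0) -> cnf_sat (ucp_repair s) Phi.
Proof.
move=> /allP sg_sat /allP s_sat; apply/allP => -[l m] lmPhi.
have [negm_l negl_m] := ucpL_closed lmPhi.
have := sg_sat _ lmPhi; rewrite /clause_sat /= => sg_lm.
have [lV0|lV0] := boolP (var_of l \in V0); have [mV0|mV0] := boolP (var_of m \in V0).
- by rewrite !lit_sat_repair_V0.
- move: lV0; rewrite mem_ucpV0 => /andP[_ /negl_m mL].
  by rewrite (lit_sat_repair_L mL) ?orbT.
- move: mV0; rewrite mem_ucpV0 => /andP[_ /negm_l lL].
  by rewrite (lit_sat_repair_L lL).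
- have [lL|lL] := boolP (l \in L); first by rewrite (lit_sat_repair_L lL).
  have [mL|mL] := boolP (m \in L); first by rewrite (lit_sat_repair_L mL) ?orbT.
  have nlL : neg l \notin L := contra negl_m mL.
  have nmL : neg m \notin L := contra negm_l lL.
  rewrite !lit_sat_repair_out //; apply: (s_sat (l, m)).
  by rewrite mem_filter lmPhi /inC /= (negbTE lV0).
Qed.

End UnitPropagation.

Theorem lemma5p1 (n : nat) (Phi : cnf n) (L0 : {set lit n}) :
  is_2cnf Phi -> satisfiable Phi ->
  Z (delC Phi L0) <= 2 ^ (#|ucpV Phi L0| * C_nonempty Phi L0) * Z Phi.
Proof.
move=> _ [sg sg_sat].
have [_|/delC_id ->] := boolP (C_nonempty Phi L0); last by rewrite muln0 mul1n.
rewrite muln1 -card_ffun_sig_bool.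
pose restrict (s : assignment n) : {ffun {x | x \in ucpV Phi L0} -> bool} :=
  [ffun x => s (val x)].
rewrite /Z; apply: (leq_card_pair_inj (f := ucp_repair Phi L0 sg) (g := restrict)).
  by move=> s; rewrite !inE; exact: ucp_repair_sat.
move=> s1 s2 _ _ [/ffunP eq_repair /ffunP eq_restrict]; apply/ffunP => x.
have [xV|xV] := boolP (x \in ucpV Phi L0).
  by have := eq_restrict (exist _ x xV); rewrite !ffunE.
by move: (eq_repair x); rewrite !(ucp_repair_out sg _ xV).
Qed.
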